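(* Consider the planar system $$\frac{dC}{dt} = 1 + m_1\frac{CL}{1+L} - m_2\frac{CL}{1+m_3C} - m_4C,\qquad \frac{dL}{dt} = L - m_5 CL,$$ with positive parameters $m_1,\dots,m_5$. Let $$a=-\frac{m_2}{1+m_3/m_5},\quad b=m_1+m_5-m_4-\frac{m_2}{1+m_3/m_5},\quad c=m_5-m_4,\quad \Delta=b^2-4ac,$$ and, assuming $\Delta\ge 0$ (so that the equilibria $E_2=(1/m_5,L_2)$ and $E_3=(1/m_5,L_3)$ exist), let $L_2=\frac{-b-\sqrt{\Delta}}{2a}$ and $L_3=\frac{-b+\sqrt{\Delta}}{2a}$. Then: 1. $L_2\ge 0$ if and only if $m_5\ge m_4$ or $m_2\le (1+m_3/m_5)(m_1+m_5-m_4)$. 2. $L_3\ge 0$ if and only if $m_2\le (1+m_3/m_5)(m_1+m_5-m_4)$ and $m_5\le m_4$.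
   Context: Nondimensional model of CAR-T cells $C$ and lymphoma cells $L$; $E_2,E_3$ are the coexistence equilibria with $C=1/m_5$, and $L_2,L_3$ are the roots of $aL^2+bL+c=0$. *)

From Stdlib Require Import Reals.
Open Scope R_scope.

Definition dC (m1 m2 m3 m4 m5 C L : R) : R :=
  1 + m1 * (C * L / (1 + L)) - m2 * (C * L / (1 + m3 * C)) - m4 * C.
Definition dL (m5 C L : R) : R := L - m5 * C * L.

(* Disc = the discriminant Delta = b^2 - 4ac of the paper.
   Coefficients of the quadratic a L^2 + b L + c = 0 for L at C = 1/m5. *)
Definition coef_a (m2 m3 m5 : R) : R := - (m2 / (1 + m3 / m5)).
Definition coef_b (m1 m2 m3 m4 m5 : R) : R :=
  m1 + m5 - m4 - m2 / (1 + m3 / m5).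
Definition coef_c (m4 m5 : R) : R := m5 - m4.
Definition Disc (m1 m2 m3 m4 m5 : R) : R :=
  coef_b m1 m2 m3 m4 m5 ^ 2 - 4 * coef_a m2 m3 m5 * coef_c m4 m5.

Definition L2 (m1 m2 m3 m4 m5 : R) : R :=
  (- coef_b m1 m2 m3 m4 m5 - sqrt (Disc m1 m2 m3 m4 m5)) / (2 * coef_a m2 m3 m5).
Definition L3 (m1 m2 m3 m4 m5 : R) : R :=
  (- coef_b m1 m2 m3 m4 m5 + sqrt (Disc m1 m2 m3 m4 m5)) / (2 * coef_a m2 m3 m5).

(** Since [a < 0], the product [c / a] of the roots has the sign of [-c]
    and their sum [-b / a] has the sign of [b].  Hence the larger root [L2]
    is nonnegative unless both roots are negative ([c < 0] and [b < 0]),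
    and the smaller root [L3] is nonnegative exactly when both are
    ([c <= 0] and [b >= 0]). *)

From Stdlib Require Import Reals Lra.
Local Open Scope R_scope.

Lemma Rdiv_nonneg_neg_iff (x y : R) : y < 0 -> 0 <= x / y <-> x <= 0.
Proof.
  intros Hy. split; intros Hx.
  - replace x with (x / y * y) by (field; lra). nra.
  - replace (x / y) with (- x * / - y) by (field; lra).
    apply Rmult_le_pos; [lra | left; apply Rinv_0_lt_compat; lra].
Qed.

Section QuadraticRootsSign.

Variables a b c : R.
Hypothesis a_neg : a < 0.
Hypothesis discr_nonneg : 0 <= b ^ 2 - 4 * a * c.

Let s := sqrt (b ^ 2 - 4 * a * c).

Let s_nonneg : 0 <= s.
Proof. apply sqrt_pos. Qed.

Let s_sqr : s * s = b ^ 2 - 4 * a * c.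
Proof. apply sqrt_sqrt, discr_nonneg. Qed.

Lemma larger_root_nonneg_iff :
  0 <= (- b - s) / (2 * a) <-> 0 <= c \/ 0 <= b.
Proof.
  rewrite Rdiv_nonneg_neg_iff by lra. split.
  - intros Hbs. destruct (Rle_dec 0 b) as [Hb | Hb]; [now right |].
    destruct (Rle_dec 0 c) as [Hc | Hc]; [now left |].
    exfalso. nra.
  - intros [Hc | Hb]; [| lra].
    destruct (Rle_dec 0 (b + s)); [lra |]. nra.
Qed.

Lemma smaller_root_nonneg_iff :
  0 <= (- b + s) / (2 * a) <-> 0 <= b /\ c <= 0.
Proof.
  rewrite Rdiv_nonneg_neg_iff by lra. split.
  - intros Hbs. split; [lra | nra].
  - intros [Hb Hc]. destruct (Rle_dec s b); [lra |]. nra.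
Qed.

End QuadraticRootsSign.

Lemma coef_a_neg (m2 m3 m5 : R) :
  0 < m2 -> 0 < m3 -> 0 < m5 -> coef_a m2 m3 m5 < 0.
Proof.
  intros H2 H3 H5. unfold coef_a.
  enough (0 < m2 / (1 + m3 / m5)) by lra.
  apply Rdiv_lt_0_compat; [lra |].
  enough (0 < m3 / m5) by lra. now apply Rdiv_lt_0_compat.
Qed.

Lemma coef_b_nonneg_iff (m1 m2 m3 m4 m5 : R) : 0 < m3 -> 0 < m5 ->
  0 <= coef_b m1 m2 m3 m4 m5 <-> m2 <= (1 + m3 / m5) * (m1 + m5 - m4).
Proof.
  intros H3 H5. unfold coef_b.
  assert (Hq : 0 < 1 + m3 / m5).
  { enough (0 < m3 / m5) by lra. now apply Rdiv_lt_0_compat. }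
  set (q := 1 + m3 / m5) in *.
  replace m2 with (m2 / q * q) at 2 by (field; lra).
  split; intros; nra.
Qed.

Theorem proposition4 (m1 m2 m3 m4 m5 : R) :
  0 < m1 -> 0 < m2 -> 0 < m3 -> 0 < m4 -> 0 < m5 ->
  0 <= Disc m1 m2 m3 m4 m5 ->
  (0 <= L2 m1 m2 m3 m4 m5 <->
     (m5 >= m4 \/ m2 <= (1 + m3 / m5) * (m1 + m5 - m4))) /\
  (0 <= L3 m1 m2 m3 m4 m5 <->
     (m2 <= (1 + m3 / m5) * (m1 + m5 - m4) /\ m5 <= m4)).
Proof.
  intros _ H2 H3 _ H5 HD.
  pose proof (coef_a_neg m2 m3 m5 H2 H3 H5) as Ha.
  pose proof (coef_b_nonneg_iff m1 m2 m3 m4 m5 H3 H5) as Hb.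
  unfold L2, L3. unfold Disc in HD |- *.
  rewrite (larger_root_nonneg_iff _ _ _ Ha HD),
          (smaller_root_nonneg_iff _ _ _ Ha HD), <- Hb.
  unfold coef_c. split; split; intros; lra.
Qed.
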